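(* Let $\vec r:\mathbb{Z}\to\mathbb{R}^2$ be a nondegenerate discrete planar curve whose first and second centroaffine curvatures $\kappa_n,\bar\kappa_n$ are $6$-periodic in $n$. Then $\vec r$ is a convex hexagon with parallel and equi-length opposite sides (i.e. $\vec r$ is closed with period $6$, simple, convex, and $\vec t_{k+3}=-\vec t_k$ for all $k$) if and only if for all $n$ $$\kappa_n>0,\qquad \kappa_n=\kappa_{n+3}=\frac{1}{\bar\kappa_{n+1}}=\frac{1}{\bar\kappa_{n+4}},\qquad \kappa_n\kappa_{n+1}\kappa_{n+2}=1.$$
   Context: A discrete planar curve is a map $\vec r:\mathbb{Z}\to\mathbb{R}^2$; $\vec r_k=\vec r(k)$, $\vec t_k=\vec r_{k+1}-\vec r_k$, $[\vec a,\vec b]$ the $2\times2$ determinant. Nondegenerate: $[\vec t_{k-1},\vec t_k]\ne0$ for all $k$. First and second centroaffine curvatures: $\kappa_k=\frac{[\vec t_k,\vec t_{k+1}]}{[\vec t_{k-1},\vec t_k]}$, $\bar\kappa_k=\frac{[\vec t_{k-1},\vec t_{k+1}]}{[\vec t_{k-1},\vec t_k]}$. Closed with period $q$: $\vec r(k+q)=\vec r(k)$ for all $k$, $q$ minimal. Extend $\vec r$ to $\mathbb{R}$ by linear interpolation on each $[k,k+1]$; a closed curve is simple if this map is injective on $[k,k+q)$. Convex: for each line through $\vec r_k,\vec r_{k+1}$, all vertices lie in one closed half-plane bounded by it. *)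

From Stdlib Require Import Reals Lra Lia ZArith.
Open Scope R_scope.

Definition pt := (R * R)%type.
Definition vsub (a b : pt) : pt := (fst a - fst b, snd a - snd b).
Definition vopp (a : pt) : pt := (- fst a, - snd a).
Definition vadd (a b : pt) : pt := (fst a + fst b, snd a + snd b).
Definition vscale (c : R) (a : pt) : pt := (c * fst a, c * snd a).
Definition det (a b : pt) : R := fst a * snd b - snd a * fst b.

Definition tan (r : Z -> pt) (k : Z) : pt := vsub (r (k + 1)%Z) (r k).

Definition nondegenerate (r : Z -> pt) : Prop :=
  forall k : Z, det (tan r (k - 1)%Z) (tan r k) <> 0.

Definition kappa (r : Z -> pt) (k : Z) : R :=
  det (tan r k) (tan r (k + 1)%Z) / det (tan r (k - 1)%Z) (tan r k).

Definition kappabar (r : Z -> pt) (k : Z) : R :=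
  det (tan r (k - 1)%Z) (tan r (k + 1)%Z) / det (tan r (k - 1)%Z) (tan r k).

Definition closed_with_period (r : Z -> pt) (q : Z) : Prop :=
  (0 < q)%Z /\ (forall k, r (k + q)%Z = r k) /\
  (forall p, (0 < p < q)%Z -> ~ (forall k, r (k + p)%Z = r k)).

(* piecewise-linear extension of r to the reals; Int_part s = floor s *)
Definition rlin (r : Z -> pt) (s : R) : pt :=
  let k := Int_part s in vadd (r k) (vscale (s - IZR k) (tan r k)).

Definition simple_closed (r : Z -> pt) (q : Z) : Prop :=
  forall (k : Z) (s1 s2 : R),
    IZR k <= s1 < IZR k + IZR q -> IZR k <= s2 < IZR k + IZR q ->
    rlin r s1 = rlin r s2 -> s1 = s2.

Definition convex (r : Z -> pt) : Prop :=
  forall k : Z,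
    (forall j : Z, 0 <= det (tan r k) (vsub (r j) (r k))) \/
    (forall j : Z, det (tan r k) (vsub (r j) (r k)) <= 0).

Definition parallel_hexagon (r : Z -> pt) : Prop :=
  closed_with_period r 6 /\ simple_closed r 6 /\ convex r /\
  (forall k : Z, tan r (k + 3)%Z = vopp (tan r k)).

(* Write D_k = [t_(k-1), t_k] and E_k = [t_(k-1), t_(k+1)] ([det_t], [det_tt]), so that
   kappa_k = D_(k+1) / D_k and kappabar_k = E_k / D_k.  The curvature conditions say exactly
   that all D_k have the same sign, D_(k+3) = D_k and E_(k+1) = D_k; as t_(k+1), t_(k+2) form
   a basis, the last two amount to t_(k+3) = -t_k.  Then the curve closes after six steps,
   and the signed area [t_a, z - r_a] of a point z against edge a ([edge_side]) vanishes at
   r_a, r_(a+1) and has the sign of D at the four other vertices.  This gives convexity,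
   shows that the line of an edge misses every half-open edge other than its own and the
   next one, and hence that the six half-open edges are disjoint.  Conversely, convexity at
   edge a puts r_(a-1) and r_(a+2) on the same side, i.e. D_a and D_(a+1) have the same sign. *)

From Stdlib Require Import Reals ZArith Lra Lia.
Open Scope R_scope.

(* Folds integer literals in indices: [k + 3 - 1] becomes [k + 2]. *)
Ltac norm_index :=
  unfold Z.sub in *; rewrite <- ?Z.add_assoc in *; simpl Z.add in *; rewrite ?Z.add_0_r in *.

Lemma div_pos_iff (a b : R) : b <> 0 -> 0 < a / b <-> 0 < a * b.
Proof.
  intros hb.
  assert (hbb : 0 < b * b) by exact (Rsqr_pos_lt b hb).
  replace (a * b) with (a / b * (b * b)) by (field; exact hb).
  split; intro h; nra.
Qed.

Lemma div_eq_div_l (a b c : R) : a <> 0 -> a / b = a / c -> b = c.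
Proof.
  intros ha h. apply Rinv_eq_reg, (Rmult_eq_reg_l a); [exact h | exact ha].
Qed.

Lemma mul_pos_of_weak_sign (x y : R) :
  x <> 0 -> y <> 0 -> (0 <= x /\ 0 <= y) \/ (x <= 0 /\ y <= 0) -> 0 < x * y.
Proof.
  intros hx hy hs.
  destruct (Rtotal_order x 0) as [hx'|[hx'|hx']]; [|contradiction|];
  destruct (Rtotal_order y 0) as [hy'|[hy'|hy']]; try contradiction; nra.
Qed.

Lemma periodic_add_mul {A : Type} (f : Z -> A) (p : Z) :
  (forall k, f (k + p)%Z = f k) -> forall q k, f (k + q * p)%Z = f k.
Proof.
  intros hp q. induction q as [|q IH|q IH] using Z.peano_ind; intros k.
  - now rewrite Z.add_0_r.
  - replace (k + Z.succ q * p)%Z with (k + q * p + p)%Z by ring.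
    now rewrite hp.
  - rewrite <- hp.
    replace (k + Z.pred q * p + p)%Z with (k + q * p)%Z by (unfold Z.pred; ring).
    apply IH.
Qed.

Lemma det_injective (p q a b : pt) :
  det p q <> 0 -> det p a = det p b -> det q a = det q b -> a = b.
Proof.
  destruct p as [p1 p2], q as [q1 q2], a as [a1 a2], b as [b1 b2].
  unfold det; simpl. intros hpq ha hb.
  assert (hp : p1 * (a2 - b2) - p2 * (a1 - b1) = 0) by lra.
  assert (hq : q1 * (a2 - b2) - q2 * (a1 - b1) = 0) by lra.
  assert (e1 : (a1 - b1) * (p1 * q2 - p2 * q1) = 0).
  { transitivity (q1 * (p1 * (a2 - b2) - p2 * (a1 - b1)) - p1 * (q1 * (a2 - b2) - q2 * (a1 - b1)));
      [ring | rewrite hp, hq; ring]. }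
  assert (e2 : (a2 - b2) * (p1 * q2 - p2 * q1) = 0).
  { transitivity (q2 * (p1 * (a2 - b2) - p2 * (a1 - b1)) - p2 * (q1 * (a2 - b2) - q2 * (a1 - b1)));
      [ring | rewrite hp, hq; ring]. }
  apply Rmult_integral in e1, e2.
  destruct e1, e2; try contradiction. f_equal; lra.
Qed.

Lemma Int_part_interval (k n : Z) (s : R) :
  IZR k <= s < IZR k + IZR n -> (k <= Int_part s < k + n)%Z.
Proof.
  intros hs. destruct (base_Int_part s) as [hlo hhi].
  split.
  - apply Z.lt_succ_r, lt_IZR. rewrite succ_IZR. lra.
  - apply lt_IZR. rewrite plus_IZR. lra.
Qed.

Definition det_t (r : Z -> pt) (k : Z) : R := det (tan r (k - 1)) (tan r k).
Definition det_tt (r : Z -> pt) (k : Z) : R := det (tan r (k - 1)) (tan r (k + 1)).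

Lemma kappa_det_t (r : Z -> pt) (k : Z) : kappa r k = det_t r (k + 1) / det_t r k.
Proof. unfold kappa, det_t. now rewrite Z.add_simpl_r. Qed.

Lemma kappabar_det_tt (r : Z -> pt) (k : Z) : kappabar r k = det_tt r k / det_t r k.
Proof. reflexivity. Qed.

Lemma curvature_conditions_iff (r : Z -> pt) :
  nondegenerate r ->
  (forall n : Z,
     0 < kappa r n /\
     kappa r n = kappa r (n + 3)%Z /\
     kappa r (n + 3)%Z = 1 / kappabar r (n + 1)%Z /\
     1 / kappabar r (n + 1)%Z = 1 / kappabar r (n + 4)%Z /\
     kappa r n * kappa r (n + 1)%Z * kappa r (n + 2)%Z = 1) <->
  (forall n, 0 < det_t r n * det_t r (n + 1)) /\
  (forall n, det_t r (n + 3) = det_t r n /\ det_tt r (n + 1) = det_t r n).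
Proof.
  intros nz.
  setoid_rewrite kappa_det_t; setoid_rewrite kappabar_det_tt.
  setoid_rewrite Rdiv_1_l; setoid_rewrite Rinv_div.
  split.
  - intros h.
    assert (period3 : forall n, det_t r (n + 3) = det_t r n).
    { intros n. destruct (h n) as (_ & _ & _ & _ & hprod). norm_index.
      pose proof (nz n); pose proof (nz (n + 1)%Z); pose proof (nz (n + 2)%Z).
      replace (det_t r (n + 1) / det_t r n * (det_t r (n + 2) / det_t r (n + 1)) *
               (det_t r (n + 3) / det_t r (n + 2))) with (det_t r (n + 3) / det_t r n)
        in hprod by (field; auto).
      rewrite <- (Rmult_1_l (det_t r n)), <- hprod. field; auto. }
    split; intros n.
    + rewrite Rmult_comm. apply (div_pos_iff _ _ (nz n)), (h n).
    + split; [apply period3|].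
      destruct (h n) as (_ & _ & hbar & _ & _). norm_index.
      pose proof (period3 (n + 1)%Z) as h4. norm_index.
      rewrite h4, period3 in hbar.
      symmetry. exact (div_eq_div_l _ _ _ (nz (n + 1)%Z) hbar).
  - intros [sign sym] n.
    pose proof (sym n) as [p3 s1]. pose proof (sym (n + 1)%Z) as [p4 _].
    pose proof (sym (n + 3)%Z) as [_ s4]. norm_index.
    pose proof (nz n); pose proof (nz (n + 1)%Z); pose proof (nz (n + 2)%Z).
    rewrite s4, p3, p4, s1.
    repeat split; try reflexivity.
    + apply (div_pos_iff _ _ (nz n)). rewrite Rmult_comm. apply sign.
    + field; auto.
Qed.

Lemma tan_antiperiodic_det (r : Z -> pt) (n : Z) :
  (forall k, tan r (k + 3) = vopp (tan r k)) ->
  det_t r (n + 3) = det_t r n /\ det_tt r (n + 1) = det_t r n.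
Proof.
  intros anti. unfold det_t, det_tt.
  pose proof (anti (n - 1)%Z) as h2. pose proof (anti n) as h3. norm_index.
  rewrite h2, h3. unfold det, vopp; simpl. split; ring.
Qed.

Lemma tan_antiperiodic_iff (r : Z -> pt) :
  nondegenerate r ->
  (forall k, tan r (k + 3) = vopp (tan r k)) <->
  (forall n, det_t r (n + 3) = det_t r n /\ det_tt r (n + 1) = det_t r n).
Proof.
  intros nondeg. split; [intros anti n; exact (tan_antiperiodic_det r n anti)|].
  intros sym k.
  pose proof (sym k) as [p3 s1]. pose proof (sym (k + 1)%Z) as [_ s2].
  pose proof (nondeg (k + 2)%Z) as nz.
  unfold det_t, det_tt in p3, s1, s2. norm_index.
  apply (det_injective (tan r (k + 1)) (tan r (k + 2))); [exact nz | |].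
  - rewrite s2. unfold det, vopp; simpl; ring.
  - rewrite p3, <- s1. unfold det, vopp; simpl; ring.
Qed.

Definition edge_side (r : Z -> pt) (a : Z) (z : pt) : R := det (tan r a) (vsub z (r a)).
Definition edge_point (r : Z -> pt) (i : Z) (u : R) : pt := vadd (r i) (vscale u (tan r i)).

Lemma edge_side_edge_point (r : Z -> pt) (a j : Z) (v : R) :
  edge_side r a (edge_point r j v) =
  (1 - v) * edge_side r a (r j) + v * edge_side r a (r (j + 1)%Z).
Proof. unfold edge_side, edge_point, det, tan, vsub, vadd, vscale; simpl; ring. Qed.

Lemma edge_side_own_edge (r : Z -> pt) (a : Z) (u : R) : edge_side r a (edge_point r a u) = 0.
Proof. unfold edge_side, edge_point, det, vsub, vadd, vscale; simpl; ring. Qed.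

Lemma convex_oriented (r : Z -> pt) :
  nondegenerate r -> convex r -> forall n, 0 < det_t r n * det_t r (n + 1).
Proof.
  intros nondeg conv n.
  assert (e1 : edge_side r n (r (n - 1)%Z) = det_t r n).
  { unfold edge_side, det_t, det, tan, vsub. norm_index. simpl. ring. }
  assert (e2 : edge_side r n (r (n + 2)%Z) = det_t r (n + 1)).
  { unfold edge_side, det_t, det, tan, vsub. norm_index. simpl. ring. }
  apply mul_pos_of_weak_sign; [apply nondeg | apply nondeg |].
  rewrite <- e1, <- e2. destruct (conv n) as [h|h]; [left | right]; split; apply h.
Qed.

Section Hexagon.
Variable r : Z -> pt.
Hypothesis anti : forall k, tan r (k + 3) = vopp (tan r k).
Hypothesis oriented : forall n, 0 < det_t r n * det_t r (n + 1).

Lemma det_t_neq0 (n : Z) : det_t r n <> 0.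
Proof. intros h. pose proof (oriented n) as o. rewrite h in o. lra. Qed.

Lemma vertex_add4 (k : Z) : r (k + 4)%Z = vadd (vsub (r (k + 3)%Z) (r (k + 1)%Z)) (r k).
Proof.
  pose proof (anti k) as h. unfold tan, vsub, vopp in h. norm_index.
  injection h as hx hy. apply injective_projections; simpl; lra.
Qed.

Lemma hexagon_periodic (k : Z) : r (k + 6)%Z = r k.
Proof.
  pose proof (vertex_add4 k) as h4. pose proof (vertex_add4 (k + 1)) as h5.
  pose proof (vertex_add4 (k + 2)) as h6. norm_index.
  rewrite h6, h5, h4. apply injective_projections; simpl; ring.
Qed.

Lemma vertex_mod6 (a b : Z) : r b = r (a + (b - a) mod 6)%Z.
Proof.
  rewrite <- (periodic_add_mul r 6 hexagon_periodic ((b - a) / 6) (a + (b - a) mod 6)).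
  f_equal. pose proof (Z_div_mod_eq_full (b - a) 6). lia.
Qed.

Lemma edge_side_vertices (a : Z) :
  edge_side r a (r a) = 0 /\
  edge_side r a (r (a + 1)%Z) = 0 /\
  edge_side r a (r (a + 2)%Z) = det_t r (a + 1) /\
  edge_side r a (r (a + 3)%Z) = det_t r a + det_t r (a + 1) /\
  edge_side r a (r (a + 4)%Z) = det_t r a + det_t r (a + 1) /\
  edge_side r a (r (a + 5)%Z) = det_t r a.
Proof.
  rewrite <- (proj1 (tan_antiperiodic_det r a anti)).
  pose proof (vertex_add4 a) as h4. pose proof (vertex_add4 (a + 1)) as h5.
  unfold edge_side, det_t, tan. norm_index.
  rewrite h5, h4. unfold det, vadd, vsub; simpl. repeat split; ring.
Qed.

Lemma edge_side_vertex (a b : Z) :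
  ((b - a) mod 6 <= 1)%Z /\ edge_side r a (r b) = 0 \/
  (1 < (b - a) mod 6)%Z /\ 0 < det_t r (a + 1) * edge_side r a (r b).
Proof.
  rewrite (vertex_mod6 a b). set (m := ((b - a) mod 6)%Z).
  assert (hm : (m = 0 \/ m = 1 \/ m = 2 \/ m = 3 \/ m = 4 \/ m = 5)%Z).
  { pose proof (Z.mod_pos_bound (b - a) 6). lia. }
  destruct (edge_side_vertices a) as (e0 & e1 & e2 & e3 & e4 & e5).
  pose proof (oriented a) as o.
  pose proof (Rsqr_pos_lt _ (det_t_neq0 (a + 1))) as sq. unfold Rsqr in sq.
  destruct hm as [ -> | [ -> | [ -> | [ -> | [ -> | -> ]]]]];
    [rewrite Z.add_0_r; left | left | right .. ]; (split; [lia|]);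
    [rewrite e0 | rewrite e1 | rewrite e2 | rewrite e3 | rewrite e4 | rewrite e5]; nra.
Qed.

Lemma edge_side_nonneg (a b : Z) : 0 <= det_t r (a + 1) * edge_side r a (r b).
Proof.
  destruct (edge_side_vertex a b) as [[_ ->]|[_ h]]; lra.
Qed.

Lemma edge_side_edge_point_pos (a j : Z) (v : R) :
  0 <= v < 1 -> (1 < (j - a) mod 6)%Z ->
  0 < det_t r (a + 1) * edge_side r a (edge_point r j v).
Proof.
  intros hv hj. rewrite edge_side_edge_point.
  destruct (edge_side_vertex a j) as [[h _]|[_ hpos]]; [lia|].
  pose proof (edge_side_nonneg a (j + 1)). nra.
Qed.

Lemma edge_points_distinct (i j : Z) (u v : R) :
  i <> j -> (i < j + 6)%Z -> (j < i + 6)%Z -> 0 <= u < 1 -> 0 <= v < 1 ->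
  edge_point r i u <> edge_point r j v.
Proof.
  intros hij hlo hhi hu hv heq.
  destruct (Z_le_gt_dec ((j - i) mod 6) 1) as [h|h].
  - assert (h' : (1 < (i - j) mod 6)%Z) by (Z.div_mod_to_equations; lia).
    pose proof (edge_side_edge_point_pos j i u hu h') as pos.
    rewrite heq, edge_side_own_edge in pos. lra.
  - pose proof (edge_side_edge_point_pos i j v hv (Z.gt_lt _ _ h)) as pos.
    rewrite <- heq, edge_side_own_edge in pos. lra.
Qed.

Lemma edge_point_injective (i : Z) (u v : R) : edge_point r i u = edge_point r i v -> u = v.
Proof.
  intros heq. pose proof (det_t_neq0 (i + 1)) as nz.
  unfold det_t in nz. rewrite Z.add_simpl_r in nz.
  unfold edge_point, vadd, vscale in heq.
  destruct (tan r i) as [x y], (tan r (i + 1)%Z) as [x' y']. unfold det in nz; simpl in *.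
  injection heq as hx hy.
  assert (ex : (u - v) * x = 0) by (ring_simplify; lra).
  assert (ey : (u - v) * y = 0) by (ring_simplify; lra).
  assert (e : (u - v) * (x * y' - y * x') = 0).
  { transitivity ((u - v) * x * y' - (u - v) * y * x'); [ring | rewrite ex, ey; ring]. }
  apply Rmult_integral in e as [e|e]; [lra | contradiction].
Qed.

Lemma hexagon_simple : simple_closed r 6.
Proof.
  intros k s1 s2 hs1 hs2 heq.
  change (edge_point r (Int_part s1) (s1 - IZR (Int_part s1)) =
          edge_point r (Int_part s2) (s2 - IZR (Int_part s2))) in heq.
  pose proof (Int_part_interval k 6 s1 hs1). pose proof (Int_part_interval k 6 s2 hs2).
  pose proof (base_Int_part s1). pose proof (base_Int_part s2).
  destruct (Z.eq_dec (Int_part s1) (Int_part s2)) as [e|ne].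
  - rewrite e in heq. apply edge_point_injective in heq. lra.
  - exfalso. refine (edge_points_distinct _ _ _ _ ne _ _ _ _ heq); lia || lra.
Qed.

Lemma hexagon_convex : convex r.
Proof.
  intros a. pose proof (det_t_neq0 (a + 1)) as nz.
  destruct (Rdichotomy _ _ nz) as [hn|hp]; [right | left]; intros j;
    pose proof (edge_side_nonneg a j); unfold edge_side in *; nra.
Qed.

Lemma hexagon_minimal_period (p : Z) : (0 < p < 6)%Z -> ~ (forall k, r (k + p)%Z = r k).
Proof.
  intros hp per.
  assert (tper : forall k, tan r (k + p) = tan r k).
  { intros k. unfold tan.
    replace (k + p + 1)%Z with (k + 1 + p)%Z by ring. now rewrite !per. }
  pose proof (det_t_neq0 1) as nz. unfold det_t in nz. simpl Z.sub in nz.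
  apply nz.
  (* Every proper period makes t_0 and t_1 parallel. *)
  assert (hcases : (p = 1 \/ p = 2 \/ p = 3 \/ p = 4 \/ p = 5)%Z) by lia.
  destruct hcases as [ -> | [ -> | [ -> | [ -> | -> ]]]].
  - pose proof (tper 0%Z) as t. simpl Z.add in t.
    rewrite t. unfold det; ring.
  - pose proof (tper 1%Z) as t. pose proof (anti 0%Z) as a0. simpl Z.add in t, a0.
    rewrite a0 in t. rewrite <- t. unfold det, vopp; simpl; ring.
  - pose proof (tper 0%Z) as t. pose proof (anti 0%Z) as a0. simpl Z.add in t, a0.
    rewrite a0 in t. destruct (tan r 0%Z) as [x y].
    injection t as tx ty. unfold det; simpl.
    replace x with 0 by lra. replace y with 0 by lra. ring.
  - pose proof (tper 0%Z) as t. pose proof (anti 1%Z) as a1. simpl Z.add in t, a1.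
    rewrite a1 in t. rewrite <- t. unfold det, vopp; simpl; ring.
  - pose proof (tper 1%Z) as t. pose proof (anti 3%Z) as a3. pose proof (anti 0%Z) as a0.
    simpl Z.add in t, a3, a0.
    rewrite a3, a0 in t. rewrite <- t. unfold det, vopp; simpl; ring.
Qed.

Lemma hexagon_closed : closed_with_period r 6.
Proof.
  split; [lia | split; [exact hexagon_periodic | exact hexagon_minimal_period]].
Qed.
End Hexagon.

Lemma parallel_hexagon_iff (r : Z -> pt) :
  nondegenerate r ->
  parallel_hexagon r <->
  (forall k, tan r (k + 3) = vopp (tan r k)) /\
  (forall n, 0 < det_t r n * det_t r (n + 1)).
Proof.
  intros nondeg. split.
  - intros (_ & _ & conv & anti). exact (conj anti (convex_oriented r nondeg conv)).
  - intros [anti oriented].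
    exact (conj (hexagon_closed r anti oriented)
             (conj (hexagon_simple r anti oriented)
                (conj (hexagon_convex r anti oriented) anti))).
Qed.

Theorem lemma7p11 (r : Z -> pt) :
  nondegenerate r ->
  (forall n : Z, kappa r (n + 6)%Z = kappa r n /\ kappabar r (n + 6)%Z = kappabar r n) ->
  (parallel_hexagon r <->
   forall n : Z,
     0 < kappa r n /\
     kappa r n = kappa r (n + 3)%Z /\
     kappa r (n + 3)%Z = 1 / kappabar r (n + 1)%Z /\
     1 / kappabar r (n + 1)%Z = 1 / kappabar r (n + 4)%Z /\
     kappa r n * kappa r (n + 1)%Z * kappa r (n + 2)%Z = 1).
Proof.
  intros nondeg _.
  rewrite parallel_hexagon_iff, curvature_conditions_iff, tan_antiperiodic_iff by exact nondeg.
  tauto.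
Qed.
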